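(* For all integers $m$ and $n$, \[ L_m \sum_{k = 1}^n ( - 1)^{k(m - 1)} L_{2mk} = ( - 1)^{n(m - 1)} L_{2mn+m} - L_m\,. \]
   Context: $L_i$ denotes the Lucas numbers, defined for all $i\in\mathbb{Z}$ by $L_i=L_{i-1}+L_{i-2}$, $L_0=2$, $L_1=1$; equivalently $L_{-i}=(-1)^iL_i$. Summation convention for an arbitrary integer upper limit: $\sum_{k=a}^{a-1} f(k)=0$, and for $n<a-1$, $\sum_{k=a}^{n} f(k) = -\sum_{k=n+1}^{a-1} f(k)$. *)

From Stdlib Require Import ZArith List.
Open Scope Z_scope.

Fixpoint lucas_nat (n : nat) : Z :=
  match n with
  | O => 2
  | S p => match p with
           | O => 1
           | S q => lucas_nat p + lucas_nat q
           end
  end.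

Definition negpow (z : Z) : Z := if Z.even z then 1 else -1.

(* Lucas numbers on all integers, via L_{-i} = (-1)^i L_i. *)
Definition lucas (i : Z) : Z :=
  if 0 <=? i then lucas_nat (Z.to_nat i)
  else negpow (- i) * lucas_nat (Z.to_nat (- i)).

Definition sum_from (a : Z) (len : nat) (f : Z -> Z) : Z :=
  fold_right Z.add 0 (map (fun j => f (a + Z.of_nat j)) (seq 0 len)).

(* \sum_{k=a}^{n} f k with the paper's convention for arbitrary integer n:
   usual sum if n >= a-1 (empty when n = a-1), and
   - \sum_{k=n+1}^{a-1} f k when n < a-1. *)
Definition sumZ (a n : Z) (f : Z -> Z) : Z :=
  if a - 1 <=? n then sum_from a (Z.to_nat (n - a + 1)) f
  else - sum_from (n + 1) (Z.to_nat (a - 1 - n)) f.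

(** With [G k = (-1)^(k(m-1)) L_(2mk+m)], the product formula
    [L_a L_b = L_(a+b) + (-1)^b L_(a-b)] at [a = 2mk], [b = m] gives
    [L_m (-1)^(k(m-1)) L_(2mk) = G k - G (k-1)], so the sum telescopes to
    [G n - G 0]; the convention for sums with [n < 0] is precisely the one
    under which telescoping holds for every integer [n].  The product formula
    holds because, as functions of [a], both sides satisfy the Fibonacci
    recurrence and they agree at [a = 0] and [a = 1]. *)

From Stdlib Require Import ZArith Lia List.
Open Scope Z_scope.

Lemma negpow_add a b : negpow (a + b) = negpow a * negpow b.
Proof. unfold negpow; rewrite Z.even_add; destruct (Z.even a), (Z.even b); reflexivity. Qed.

Lemma negpow_opp a : negpow (- a) = negpow a.
Proof. unfold negpow; rewrite Z.even_opp; reflexivity. Qed.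

Lemma negpow_double a : negpow (2 * a) = 1.
Proof. unfold negpow; rewrite Z.even_mul; reflexivity. Qed.

Lemma negpow_sqr a : negpow a * negpow a = 1.
Proof. unfold negpow; destruct (Z.even a); reflexivity. Qed.

Lemma negpow_succ a : negpow (a + 1) = - negpow a.
Proof. rewrite negpow_add; change (negpow 1) with (-1); ring. Qed.

Lemma lucas_of_nat k : lucas (Z.of_nat k) = lucas_nat k.
Proof.
  unfold lucas; rewrite Nat2Z.id.
  now replace (0 <=? Z.of_nat k) with true by (symmetry; apply Z.leb_le; lia).
Qed.

Lemma lucas_opp i : lucas (- i) = negpow i * lucas i.
Proof.
  unfold lucas; rewrite Z.opp_involutive, negpow_opp.
  destruct (Z.compare_spec i 0) as [-> | Hneg | Hpos]; [reflexivity | |].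
  - replace (0 <=? - i) with true by (symmetry; apply Z.leb_le; lia).
    replace (0 <=? i) with false by (symmetry; apply Z.leb_gt; lia).
    rewrite Z.mul_assoc, negpow_sqr; ring.
  - replace (0 <=? - i) with false by (symmetry; apply Z.leb_gt; lia).
    now replace (0 <=? i) with true by (symmetry; apply Z.leb_le; lia).
Qed.

Lemma lucas_rec_nonneg i : 0 <= i -> lucas (i + 2) = lucas (i + 1) + lucas i.
Proof.
  intros Hi; destruct (Z_of_nat_complete i Hi) as [k ->].
  replace (Z.of_nat k + 2) with (Z.of_nat (S (S k))) by lia.
  replace (Z.of_nat k + 1) with (Z.of_nat (S k)) by lia.
  now rewrite !lucas_of_nat.
Qed.

Lemma lucas_rec i : lucas (i + 2) = lucas (i + 1) + lucas i.
Proof.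
  destruct (Z_le_gt_dec 0 i) as [Hi | Hi]; [now apply lucas_rec_nonneg |].
  destruct (Z.eq_dec i (-1)) as [-> | Hi1]; [reflexivity |].
  set (j := - i - 2).
  replace (i + 2) with (- j) by (unfold j; ring).
  replace (i + 1) with (- (j + 1)) by (unfold j; ring).
  replace i with (- (j + 2)) by (unfold j; ring).
  rewrite !lucas_opp, lucas_rec_nonneg by (unfold j; lia).
  replace (j + 2) with (j + 1 + 1) by ring.
  rewrite !negpow_succ; ring.
Qed.

Definition fib_rec (f : Z -> Z) : Prop := forall i, f (i + 2) = f (i + 1) + f i.

Lemma fib_rec_eq0 f : fib_rec f -> f 0 = 0 -> f 1 = 0 -> forall i, f i = 0.
Proof.
  intros Hrec H0 H1 i.
  enough (Hpair : forall x, f x = 0 /\ f (x + 1) = 0) by apply Hpair.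
  apply Z.peano_ind; [now split |..]; intros x [Hx Hx1]; split.
  - now rewrite <- Z.add_1_r.
  - replace (Z.succ x + 1) with (x + 2) by lia; rewrite Hrec, Hx, Hx1; ring.
  - pose proof (Hrec (Z.pred x)) as E.
    replace (Z.pred x + 2) with (x + 1) in E by lia.
    replace (Z.pred x + 1) with x in E by lia.
    lia.
  - now replace (Z.pred x + 1) with x by lia.
Qed.

Lemma lucas_mul a b : lucas a * lucas b = lucas (a + b) + negpow b * lucas (a - b).
Proof.
  set (f a := lucas a * lucas b - lucas (a + b) - negpow b * lucas (a - b)).
  enough (forall a, f a = 0) as H by (specialize (H a); unfold f in H; lia).
  apply fib_rec_eq0; unfold f.
  - intro i.
    replace (i + 2 + b) with (i + b + 2) by ring.
    replace (i + 1 + b) with (i + b + 1) by ring.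
    replace (i + 2 - b) with (i - b + 2) by ring.
    replace (i + 1 - b) with (i - b + 1) by ring.
    rewrite !lucas_rec; ring.
  - rewrite Z.add_0_l; replace (0 - b) with (- b) by ring.
    rewrite lucas_opp, Z.mul_assoc, negpow_sqr; change (lucas 0) with 2; ring.
  - pose proof (lucas_rec (b - 1)) as E.
    replace (b - 1 + 2) with (1 + b) in E by ring.
    replace (b - 1 + 1) with b in E by ring.
    replace (1 - b) with (- (b - 1)) by ring.
    replace (negpow b) with (- negpow (b - 1)) by (rewrite <- negpow_succ; f_equal; ring).
    rewrite lucas_opp, Z.mul_opp_l, Z.mul_assoc, negpow_sqr, E.
    change (lucas 1) with 1; ring.
Qed.

Lemma sum_from_succ a len f : sum_from a (S len) f = f a + sum_from (a + 1) len f.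
Proof.
  unfold sum_from; cbn; rewrite Z.add_0_r, <- seq_shift, map_map.
  do 2 f_equal; apply map_ext; intro j; f_equal; lia.
Qed.

Lemma sum_from_mul_l c a len f :
  c * sum_from a len f = sum_from a len (fun k => c * f k).
Proof.
  revert a; induction len as [| len IH]; intro a; [unfold sum_from; cbn; ring |].
  rewrite !sum_from_succ, <- IH; ring.
Qed.

Lemma sum_from_telescope a len f G : (forall k, f k = G k - G (k - 1)) ->
  sum_from a len f = G (a + Z.of_nat len - 1) - G (a - 1).
Proof.
  intros Hf; revert a; induction len as [| len IH]; intro a.
  - unfold sum_from; cbn [seq map fold_right Z.of_nat]; rewrite Z.add_0_r; ring.
  - rewrite sum_from_succ, IH, Hf.
    replace (a + 1 + Z.of_nat len - 1) with (a + Z.of_nat (S len) - 1) by lia.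
    replace (a + 1 - 1) with a by ring; ring.
Qed.

Lemma sumZ_mul_l c a n f : c * sumZ a n f = sumZ a n (fun k => c * f k).
Proof.
  unfold sumZ; destruct (a - 1 <=? n); rewrite <- sum_from_mul_l; ring.
Qed.

Lemma sumZ_telescope a n f G : (forall k, f k = G k - G (k - 1)) ->
  sumZ a n f = G n - G (a - 1).
Proof.
  intros Hf; unfold sumZ; destruct (Z.leb_spec (a - 1) n);
    rewrite (sum_from_telescope _ _ f G Hf), Z2Nat.id by lia.
  - now replace (a + (n - a + 1) - 1) with n by ring.
  - replace (n + 1 + (a - 1 - n) - 1) with (a - 1) by ring.
    replace (n + 1 - 1) with n by ring; ring.
Qed.

Theorem lemma4 (m n : Z) :
  lucas m * sumZ 1 n (fun k => negpow (k * (m - 1)) * lucas (2 * m * k))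
  = negpow (n * (m - 1)) * lucas (2 * m * n + m) - lucas m.
Proof.
  set (G k := negpow (k * (m - 1)) * lucas (2 * m * k + m)).
  assert (Hsign : forall k, negpow (k * (m - 1)) * negpow m = - negpow ((k - 1) * (m - 1))).
  { intro k.
    replace (k * (m - 1)) with ((k - 1) * (m - 1) + 2 * m + -1 + - m) by ring.
    rewrite !negpow_add, negpow_double, negpow_opp.
    change (negpow (-1)) with (-1).
    rewrite <- Z.mul_assoc, negpow_sqr; ring. }
  rewrite sumZ_mul_l, (sumZ_telescope _ _ _ G).
  - unfold G; replace (1 - 1) with 0 by ring.
    replace (2 * m * 0 + m) with m by ring; rewrite Z.mul_0_l; change (negpow 0) with 1; ring.
  - intro k; unfold G.
    rewrite Z.mul_comm, <- Z.mul_assoc, lucas_mul, Z.mul_add_distr_l, Z.mul_assoc, Hsign.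
    replace (2 * m * k - m) with (2 * m * (k - 1) + m) by ring; ring.
Qed.
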